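(* Let $n\ge1$ and $\gamma=0$ (so $\beta=1$). Consider the problem of finding $\ell,R>0$ and $U:[0,R]\to[0,\infty)$, continuous on $[0,R]$ and $C^2$ on $[0,R)$, such that $$U''+\Big(\frac{n-1}{r}-\frac r2\Big)U'+\frac12U=0\ \text{ in }(0,R),\quad U(0)=\ell,\ U'(0)=0,\quad U(R)=0,\ U'(R)=-\sqrt2.$$ This problem has exactly one solution $(\ell,R,U)$, given by $U(r)=\ell\,\mathbf M(-\tfrac12,\tfrac n2,\tfrac{r^2}{4})$, $R=2\sqrt{s_\star}$ and $\frac1\ell=-\sqrt{\frac{s_\star}{2}}\,\frac{d}{ds}\mathbf M(-\tfrac12,\tfrac n2,s)\big|_{s=s_\star}$, where $s_\star>0$ is the unique positive zero of $s\mapsto\mathbf M(-\tfrac12,\tfrac n2,s)$.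
   Context: $\mathbf M(a,b,s)=\sum_{k\ge0}\frac{(a)_k}{(b)_k}\frac{s^k}{k!}$ is Kummer's confluent hypergeometric function ($(a)_k$ the Pochhammer symbol). $U'(R)$ is the left derivative at $R$. (This is the profile equation for radial self-similar solutions $u(x,t)=|t|^{\beta/2}U(|t|^{-1/2}|x|)$, $t<0$, with $U$ extended by zero for $r\ge R$.) *)

From Stdlib Require Import Reals.
From Coquelicot Require Import Coquelicot.
Open Scope R_scope.

Fixpoint poch (a : R) (k : nat) : R :=
  match k with
  | O => 1
  | S k' => poch a k' * (a + INR k')
  end.

Definition kummerM (a b s : R) : R :=
  Series (fun k => poch a k / poch b k * s ^ k / INR (Factorial.fact k)).

Definition continuous_on (D : R -> Prop) (f : R -> R) : Prop :=
  forall r, D r -> filterlim f (within D (locally r)) (locally (f r)).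

Definition derivative_on (D : R -> Prop) (f f' : R -> R) : Prop :=
  forall r, D r ->
    filterlim (fun x => (f x - f r) / (x - r))
              (within (fun x => D x /\ x <> r) (locally r)) (locally (f' r)).

(* U is continuous on [0,R], C^2 on [0,R) (one-sided at 0) with first and
   second derivatives U1, U2; U'(R) is the left derivative at R. *)
Definition profile_solution (n : nat) (ell Rr : R) (U : R -> R) : Prop :=
  0 < ell /\ 0 < Rr /\
  (forall r, 0 <= r <= Rr -> 0 <= U r) /\
  continuous_on (fun r => 0 <= r <= Rr) U /\
  (exists U1 U2 : R -> R,
     derivative_on (fun r => 0 <= r < Rr) U U1 /\
     derivative_on (fun r => 0 <= r < Rr) U1 U2 /\
     continuous_on (fun r => 0 <= r < Rr) U2 /\
     (forall r, 0 < r < Rr ->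
        U2 r + ((INR n - 1) / r - r / 2) * U1 r + U r / 2 = 0) /\
     U 0 = ell /\ U1 0 = 0) /\
  U Rr = 0 /\
  filterlim (fun x => (U x - U Rr) / (x - Rr))
            (within (fun x => 0 <= x < Rr) (locally Rr)) (locally (- sqrt 2)).

(* Under s = r^2/4 the profile equation becomes Kummer's equation
   s M'' + (n/2 - s) M' + M/2 = 0, whose solution regular at 0 with M(0) = 1 is
   M = M(-1/2, n/2, .).  Since a = -1/2, every Taylor coefficient of M after the
   constant one is negative, so M' <= -1/n on [0, oo): M decreases strictly and has
   exactly one positive zero s*.  Existence: U = ell M(r^2/4) on [0, 2 sqrt s*], with
   ell fixed by U'(R) = -sqrt 2.  Uniqueness: W = U - U(0) M(r^2/4) solves the profile
   equation with W(0) = W'(0) = 0; as the singular coefficient (n-1)/r is nonnegative,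
   the energy (W'^2 + W^2) e^{-(R+1) r} is nonincreasing and tends to 0 at 0, so W = 0.
   Then U(R) = 0 forces R^2/4 = s*, and U'(R) = -sqrt 2 determines ell. *)

From Stdlib Require Import Reals Lra Psatz.
From Coquelicot Require Import Coquelicot.
Open Scope R_scope.

Lemma filter_le_within_subset {T} (F : (T -> Prop) -> Prop) {FF : Filter F}
  (D E : T -> Prop) :
  (forall x, D x -> E x) -> filter_le (within D F) (within E F).
Proof.
  intros HDE P. unfold within. apply filter_imp. intros x HP Dx. exact (HP (HDE x Dx)).
Qed.

Lemma at_left_le_within (D : R -> Prop) x :
  locally x (fun y => y < x -> D y) -> filter_le (at_left x) (within D (locally x)).
Proof.
  intros HD P HP. unfold at_left, within in *.
  generalize (filter_and _ _ HD HP). apply filter_imp. intros y [H1 H2] Hy. exact (H2 (H1 Hy)).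
Qed.

Lemma at_right_le_within (D : R -> Prop) x :
  locally x (fun y => x < y -> D y) -> filter_le (at_right x) (within D (locally x)).
Proof.
  intros HD P HP. unfold at_right, within in *.
  generalize (filter_and _ _ HD HP). apply filter_imp. intros y [H1 H2] Hy. exact (H2 (H1 Hy)).
Qed.

Section FilterlimArith.
Context {T : Type} (F : (T -> Prop) -> Prop) {FF : Filter F}.

Lemma filterlim_fun_plus (f g : T -> R) x y :
  filterlim f F (locally x) -> filterlim g F (locally y) ->
  filterlim (fun t => f t + g t) F (locally (x + y)).
Proof. intros Hf Hg. exact (filterlim_comp_2 f g Rplus Hf Hg (filterlim_plus x y)). Qed.

Lemma filterlim_fun_mult (f g : T -> R) x y :
  filterlim f F (locally x) -> filterlim g F (locally y) ->
  filterlim (fun t => f t * g t) F (locally (x * y)).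
Proof. intros Hf Hg. exact (filterlim_comp_2 f g Rmult Hf Hg (filterlim_mult x y)). Qed.

Lemma filterlim_fun_minus (f g : T -> R) x y :
  filterlim f F (locally x) -> filterlim g F (locally y) ->
  filterlim (fun t => f t - g t) F (locally (x - y)).
Proof.
  intros Hf Hg. apply filterlim_fun_plus; [exact Hf|].
  eapply filterlim_comp; [exact Hg | exact (filterlim_opp y)].
Qed.

End FilterlimArith.

Lemma is_derive_iff_quotient (f : R -> R) (x l : R) :
  is_derive f x l <-> is_lim (fun y => (f y - f x) / (y - x)) x l.
Proof.
  rewrite is_derive_Reals, <- is_lim_spec. split.
  - intros H eps. destruct (H eps (cond_pos eps)) as [d Hd]. exists d.
    intros y Hy Hyx. change (Rabs (y - x) < d) in Hy.
    specialize (Hd (y - x) (Rminus_eq_contra _ _ Hyx) Hy).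
    rewrite Rplus_minus in Hd. exact Hd.
  - intros H eps Heps. destruct (H (mkposreal eps Heps)) as [d Hd]. exists d.
    intros h Hh0 Hh. replace h with (x + h - x) at 2 by ring. apply Hd.
    + change (Rabs (x + h - x) < d). replace (x + h - x) with h by ring. exact Hh.
    + intros E. apply Hh0. lra.
Qed.

Lemma derivative_on_of_is_derive (D : R -> Prop) (f f' : R -> R) :
  (forall r, D r -> is_derive f r (f' r)) -> derivative_on D f f'.
Proof.
  intros Hf r Dr.
  eapply filterlim_filter_le_1; [|exact (proj1 (is_derive_iff_quotient _ _ _) (Hf r Dr))].
  apply filter_le_within_subset; [apply locally_filter | now intros y [_ H]].
Qed.

Lemma is_derive_of_derivative_on (D : R -> Prop) (f f' : R -> R) r :
  derivative_on D f f' -> locally r D -> is_derive f r (f' r).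
Proof.
  intros Hf HD. apply is_derive_iff_quotient.
  eapply filterlim_filter_le_1; [|exact (Hf r (locally_singleton _ _ HD))].
  intros P HP. unfold Rbar_locally', locally', within in *.
  generalize (filter_and _ _ HD HP). apply filter_imp. intros y [Dy H] Hyr. exact (H (conj Dy Hyr)).
Qed.

Lemma continuous_on_of_derivative_on (D : R -> Prop) (f f' : R -> R) :
  derivative_on D f f' -> continuous_on D f.
Proof.
  intros Hf r Dr.
  assert (Hpunct : filterlim f (within (fun y => D y /\ y <> r) (locally r))
                     (locally (f r + f' r * (r - r)))).
  { apply filterlim_within_ext with (f := fun y => f r + (f y - f r) / (y - r) * (y - r)).
    { intros y [_ Hyr]. field. lra. }
    refine (filterlim_fun_plus _ _ _ _ _ (filterlim_const _) _).
    refine (filterlim_fun_mult _ _ _ _ _ (Hf r Dr) _).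
    refine (filterlim_fun_minus _ _ _ _ _ _ (filterlim_const _)).
    exact (filterlim_filter_le_1 _ (filter_le_within (F := locally r) _) (filterlim_id _ _)). }
  replace (f r + f' r * (r - r)) with (f r) in Hpunct by ring.
  intros P HP. specialize (Hpunct P HP). unfold within, filtermap in *.
  apply filter_imp with (2 := Hpunct). intros y H Dy.
  destruct (Req_dec y r) as [->|Hyr]; [exact (locally_singleton _ _ HP)|].
  exact (H (conj Dy Hyr)).
Qed.

Lemma derive_le_sub_le (f f' : R -> R) (K x y : R) :
  x <= y -> (forall t, x <= t <= y -> is_derive f t (f' t)) ->
  (forall t, x <= t <= y -> f' t <= K) -> f y - f x <= K * (y - x).
Proof.
  intros Hxy Hd HK.
  assert (Hmvt := MVT_gen f x y f'). cbv zeta in Hmvt.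
  rewrite Rmin_left, Rmax_right in Hmvt by exact Hxy.
  destruct Hmvt as [c [Hc ->]].
  - intros t Ht. apply Hd. lra.
  - intros t Ht. apply derivable_continuous_pt. exists (f' t).
    apply is_derive_Reals, Hd. exact Ht.
  - apply Rmult_le_compat_r; [lra | apply HK; exact Hc].
Qed.

Lemma ode_solution_eq0_of_zero_data (p w w1 w2 : R -> R) (L : R) :
  (forall x, 0 < x < L -> is_derive w x (w1 x)) ->
  (forall x, 0 < x < L -> is_derive w1 x (w2 x)) ->
  (forall x, 0 < x < L -> 0 <= p x) ->
  (forall x, 0 < x < L -> w2 x + (p x - x / 2) * w1 x + w x / 2 = 0) ->
  filterlim w (at_right 0) (locally 0) -> filterlim w1 (at_right 0) (locally 0) ->
  forall x, 0 < x < L -> w x = 0.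
Proof.
  intros Hw Hw1 Hp Hode Hw0 Hw10.
  set (E x := w1 x * w1 x + w x * w x).
  set (G x := E x * exp (- ((L + 1) * x))).
  set (G' x := (2 * w1 x * w2 x + 2 * w x * w1 x - (L + 1) * E x) * exp (- ((L + 1) * x))).
  assert (HG : forall x, 0 < x < L -> is_derive G x (G' x)).
  { intros x Hx. unfold G, G', E. auto_derive.
    - assert (ex_derive w1 x) by (exists (w2 x); auto).
      assert (ex_derive w x) by (exists (w1 x); auto). tauto.
    - replace (Derive (fun y => w y) x) with (w1 x) by (symmetry; apply is_derive_unique; auto).
      replace (Derive (fun y => w1 y) x) with (w2 x) by (symmetry; apply is_derive_unique; auto).
      ring. }
  (* [G' <= 0] because [p >= 0], [x w1^2 <= L w1^2] and [w w1 <= E / 2] *)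
  assert (HG'_nonpos : forall x, 0 < x < L -> G' x <= 0).
  { intros x Hx. unfold G', E.
    replace (w2 x) with (- (p x - x / 2) * w1 x - w x / 2) by (specialize (Hode x Hx); lra).
    apply Rmult_le_0_r; [|apply Rlt_le, exp_pos].
    specialize (Hp x Hx).
    assert (0 <= p x * (w1 x * w1 x)) by (apply Rmult_le_pos; nra).
    assert (0 <= (L - x) * (w1 x * w1 x)) by (apply Rmult_le_pos; nra).
    assert (0 <= L * (w x * w x)) by (apply Rmult_le_pos; nra).
    nra. }
  assert (HE : filterlim E (at_right 0) (locally 0)).
  { assert (H := filterlim_fun_plus _ _ _ _ _ (filterlim_fun_mult _ _ _ _ _ Hw10 Hw10)
                                         (filterlim_fun_mult _ _ _ _ _ Hw0 Hw0)).
    rewrite Rmult_0_l, Rplus_0_l in H. exact H. }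
  intros r Hr.
  assert (HGr : G r <= 0).
  { change (Rbar_le (G r) 0).
    apply (filterlim_le (F := at_right 0)) with (f := fun _ => G r) (g := E);
      [| apply filterlim_const | exact HE].
    unfold at_right, within. generalize (open_lt r 0 (proj1 Hr)). apply filter_imp.
    intros x Hxr Hx0.
    apply Rle_trans with (G x).
    - assert (H := derive_le_sub_le G G' 0 x r (ltac:(lra))
                     (fun t Ht => HG t (ltac:(lra))) (fun t Ht => HG'_nonpos t (ltac:(lra)))).
      lra.
    - unfold G. rewrite <- (Rmult_1_r (E x)) at 2.
      apply Rmult_le_compat_l; [unfold E; nra|].
      assert (0 < (L + 1) * x) by (apply Rmult_lt_0_compat; lra).
      assert (Hexp := exp_increasing (- ((L + 1) * x)) 0 ltac:(lra)).
      rewrite exp_0 in Hexp. lra. }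
  assert (HEr : E r <= 0).
  { apply Rmult_le_reg_r with (exp (- ((L + 1) * r))); [apply exp_pos|].
    rewrite Rmult_0_l. exact HGr. }
  unfold E in HEr. nra.
Qed.

Lemma PSeries_zero x : PSeries (fun _ => 0) x = 0.
Proof. unfold PSeries. rewrite Series_scal_l. apply Rmult_0_l. Qed.

Lemma PSeries_nonneg (c : nat -> R) x :
  (forall k, 0 <= c k) -> 0 <= x -> ex_pseries c x -> 0 <= PSeries c x.
Proof.
  intros Hc Hx Hex. rewrite <- (PSeries_zero x). apply Series_le; [|now apply ex_pseries_R].
  intros k. rewrite Rmult_0_l. split; [lra|]. apply Rmult_le_pos; [apply Hc | now apply pow_le].
Qed.

Lemma ex_pseries_entire (c : nat -> R) x : CV_radius c = p_infty -> ex_pseries c x.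
Proof. intros Hc. apply CV_radius_inside. now rewrite Hc. Qed.

Lemma is_derive_PSeries_entire (c : nat -> R) x :
  CV_radius c = p_infty -> is_derive (PSeries c) x (PSeries (PS_derive c) x).
Proof. intros Hc. apply is_derive_PSeries. now rewrite Hc. Qed.

Lemma PSeries_le_coef0 (c : nat -> R) x :
  CV_radius c = p_infty -> (forall k, c (S k) <= 0) -> 0 <= x -> PSeries c x <= c O.
Proof.
  intros Hc Hneg Hx. rewrite PSeries_decr_1 by now apply ex_pseries_entire.
  assert (Htail : 0 <= PSeries (PS_opp (PS_decr_1 c)) x).
  { apply PSeries_nonneg; [intros k; apply Ropp_0_ge_le_contravar, Rle_ge, Hneg | exact Hx |].
    apply ex_pseries_opp, ex_pseries_entire. now rewrite CV_radius_decr_1. }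
  rewrite PSeries_opp in Htail. nra.
Qed.

Lemma poch_pos b k : 0 < b -> 0 < poch b k.
Proof.
  intros Hb. induction k as [|k IH]; simpl; [lra|].
  apply Rmult_lt_0_compat; [exact IH|]. pose proof (pos_INR k). lra.
Qed.

Definition kummer_coef (a b : R) (k : nat) : R :=
  poch a k / poch b k / INR (Factorial.fact k).

Definition dkummerM (a b s : R) : R := PSeries (PS_derive (kummer_coef a b)) s.

Definition d2kummerM (a b s : R) : R :=
  PSeries (PS_derive (PS_derive (kummer_coef a b))) s.

Lemma kummerM_PSeries a b s : 0 < b -> kummerM a b s = PSeries (kummer_coef a b) s.
Proof.
  intros Hb. apply Series_ext. intros k. unfold kummer_coef.
  pose proof (poch_pos b k Hb). pose proof (INR_fact_lt_0 k). field. lra.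
Qed.

Definition kummer_profile (a b r : R) : R := kummerM a b (r ^ 2 / 4).

Definition dkummer_profile (a b r : R) : R := dkummerM a b (r ^ 2 / 4) * (r / 2).

Definition d2kummer_profile (a b r : R) : R :=
  d2kummerM a b (r ^ 2 / 4) * (r / 2) ^ 2 + dkummerM a b (r ^ 2 / 4) / 2.

Section KummerNegativeParameter.
Variables a b : R.
Hypothesis Ha : -1 < a < 0.
Hypothesis Hb : 0 < b.

Lemma poch_S_neg k : poch a (S k) < 0.
Proof.
  induction k as [|k IH]; [simpl; lra|].
  change (poch a (S (S k))) with (poch a (S k) * (a + INR (S k))).
  assert (0 < a + INR (S k)) by (rewrite S_INR; pose proof (pos_INR k); lra).
  nra.
Qed.

Lemma kummer_coef_S k :
  kummer_coef a b (S k) = kummer_coef a b k * ((a + INR k) / ((b + INR k) * INR (S k))).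
Proof.
  unfold kummer_coef. pose proof (poch_pos b k Hb). pose proof (INR_fact_lt_0 k).
  pose proof (pos_INR k). pose proof (lt_0_INR (S k) (Nat.lt_0_succ k)).
  change (Factorial.fact (S k)) with (S k * Factorial.fact k)%nat.
  rewrite mult_INR. simpl poch. field. lra.
Qed.

Lemma kummer_coef_S_neg k : kummer_coef a b (S k) < 0.
Proof.
  unfold kummer_coef, Rdiv. pose proof (poch_S_neg k).
  pose proof (Rinv_0_lt_compat _ (poch_pos b (S k) Hb)).
  pose proof (Rinv_0_lt_compat _ (INR_fact_lt_0 (S k))).
  assert (poch a (S k) * / poch b (S k) < 0) by nra. nra.
Qed.

Lemma kummer_coef_neq0 k : kummer_coef a b k <> 0.
Proof.
  destruct k as [|k]; [unfold kummer_coef; simpl; lra|].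
  pose proof (kummer_coef_S_neg k). lra.
Qed.

Lemma CV_radius_kummer_coef : CV_radius (kummer_coef a b) = p_infty.
Proof.
  apply CV_radius_infinite_DAlembert; [exact kummer_coef_neq0|].
  apply is_lim_seq_le_le with (u := fun _ => 0) (w := fun k => / (INR k + b)).
  - intros k. rewrite kummer_coef_S. pose proof (kummer_coef_neq0 k).
    pose proof (pos_INR k). rewrite S_INR.
    replace (kummer_coef a b k * ((a + INR k) / ((b + INR k) * (INR k + 1))) / kummer_coef a b k)
      with ((a + INR k) / (b + INR k) / (INR k + 1)) by (field; lra).
    split; [apply Rabs_pos|].
    rewrite !Rabs_div, (Rabs_pos_eq (b + INR k)), (Rabs_pos_eq (INR k + 1)) by lra.
    assert (Habs : Rabs (a + INR k) <= INR k + 1) by (apply Rabs_le; lra).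
    replace (/ (INR k + b)) with ((INR k + 1) / (b + INR k) / (INR k + 1)) by (field; lra).
    unfold Rdiv. apply Rmult_le_compat_r; [apply Rlt_le, Rinv_0_lt_compat; lra|].
    apply Rmult_le_compat_r; [apply Rlt_le, Rinv_0_lt_compat; lra | exact Habs].
  - apply is_lim_seq_const.
  - replace (Finite 0) with (Rbar_inv p_infty) by reflexivity.
    apply is_lim_seq_inv; [|discriminate].
    eapply is_lim_seq_plus; [apply is_lim_seq_INR | apply is_lim_seq_const | reflexivity].
Qed.

Lemma is_derive_kummerM (s : R) : is_derive (kummerM a b) s (dkummerM a b s).
Proof.
  apply is_derive_ext with (f := PSeries (kummer_coef a b)).
  - intros t. symmetry. now apply kummerM_PSeries.
  - exact (is_derive_PSeries_entire _ s CV_radius_kummer_coef).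
Qed.

Lemma is_derive_dkummerM (s : R) : is_derive (dkummerM a b) s (d2kummerM a b s).
Proof.
  apply is_derive_PSeries_entire. rewrite CV_radius_derive. exact CV_radius_kummer_coef.
Qed.

Lemma ex_derive_d2kummerM (s : R) : ex_derive (d2kummerM a b) s.
Proof.
  eexists. apply is_derive_PSeries_entire.
  rewrite !CV_radius_derive. exact CV_radius_kummer_coef.
Qed.

Lemma kummerM_0 : kummerM a b 0 = 1.
Proof. rewrite kummerM_PSeries, PSeries_0 by exact Hb. unfold kummer_coef. simpl. field. Qed.

Lemma kummer_ode s :
  s * d2kummerM a b s + (b - s) * dkummerM a b s - a * kummerM a b s = 0.
Proof.
  set (c := kummer_coef a b). set (c1 := PS_derive c). set (c2 := PS_derive c1).
  assert (Hc : forall d, CV_radius d = p_infty -> is_pseries d s (PSeries d s)).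
  { intros d Hd. apply PSeries_correct, ex_pseries_entire, Hd. }
  assert (Hc1 : CV_radius c1 = p_infty)
    by (unfold c1; rewrite CV_radius_derive; exact CV_radius_kummer_coef).
  assert (Hc2 : CV_radius c2 = p_infty) by (unfold c2; rewrite CV_radius_derive; exact Hc1).
  assert (Hcomm : forall x y : R, mult x y = mult y x) by (intros; apply Rmult_comm).
  assert (Hsum := is_pseries_plus _ _ _ _ _
    (is_pseries_plus _ _ _ _ _ (is_pseries_incr_1 _ _ _ (Hc c2 Hc2))
                               (is_pseries_scal b _ _ _ (Hcomm _ _) (Hc c1 Hc1)))
    (is_pseries_plus _ _ _ _ _
       (is_pseries_scal (-1) _ _ _ (Hcomm _ _) (is_pseries_incr_1 _ _ _ (Hc c1 Hc1)))
       (is_pseries_scal (- a) _ _ _ (Hcomm _ _) (Hc c CV_radius_kummer_coef)))).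
  apply is_pseries_unique in Hsum.
  rewrite kummerM_PSeries by exact Hb. unfold dkummerM, d2kummerM. fold c c1 c2.
  rewrite (PSeries_ext _ (fun _ => 0)), PSeries_zero in Hsum.
  - unfold plus, scal in Hsum; simpl in Hsum; unfold mult in Hsum; simpl in Hsum.
    rewrite Hsum. ring.
  - intros k. unfold c2, c1, PS_plus, PS_scal, PS_incr_1, PS_derive.
    destruct k as [|k]; cbn -[INR]; unfold c.
    + rewrite (kummer_coef_S O). unfold kummer_coef. simpl. field. lra.
    + rewrite (kummer_coef_S (S k)), (kummer_coef_S k), !S_INR.
      pose proof (pos_INR k). field. lra.
Qed.

Lemma dkummerM_le s : 0 <= s -> dkummerM a b s <= a / b.
Proof.
  intros Hs. unfold dkummerM.
  replace (a / b) with (PS_derive (kummer_coef a b) O)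
    by (unfold PS_derive; rewrite kummer_coef_S; unfold kummer_coef; simpl; field; lra).
  apply PSeries_le_coef0; [rewrite CV_radius_derive; exact CV_radius_kummer_coef | | exact Hs].
  intros k. unfold PS_derive.
  pose proof (pos_INR (S (S k))). pose proof (kummer_coef_S_neg (S k)). nra.
Qed.

Lemma kummerM_sub_le x y :
  0 <= x <= y -> kummerM a b y - kummerM a b x <= a / b * (y - x).
Proof.
  intros Hxy. apply derive_le_sub_le with (f' := dkummerM a b); [lra| |].
  - intros t _. apply is_derive_kummerM.
  - intros t Ht. apply dkummerM_le. lra.
Qed.

Lemma kummerM_decreasing x y : 0 <= x < y -> kummerM a b y < kummerM a b x.
Proof.
  intros Hxy. pose proof (kummerM_sub_le x y ltac:(lra)).
  assert (a / b * (y - x) < 0) by (apply Rmult_neg_pos; [apply Rdiv_neg_pos|]; lra). lra.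
Qed.

Lemma kummerM_unique_positive_root :
  exists s, 0 < s /\ kummerM a b s = 0 /\
    (forall t, 0 < t -> kummerM a b t = 0 -> t = s).
Proof.
  (* [kummerM a b] starts at 1 and stays below the line [1 + a s / b], which vanishes
     at [b / - a] *)
  assert (Hba : 0 < b / - a) by (apply Rdiv_lt_0_compat; lra).
  assert (Hend : kummerM a b (b / - a) <= 0).
  { pose proof (kummerM_sub_le 0 (b / - a) ltac:(lra)) as H.
    rewrite kummerM_0 in H. replace (a / b * (b / - a - 0)) with (-1) in H by (field; lra). lra. }
  destruct (IVT_gen (kummerM a b) 0 (b / - a) 0) as [s [Hs Hroot]].
  - intros t. apply derivable_continuous_pt. eexists. apply is_derive_Reals, is_derive_kummerM.
  - rewrite kummerM_0, Rmin_right, Rmax_left; lra.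
  - rewrite Rmin_left, Rmax_right in Hs by lra.
    assert (Hs0 : 0 < s).
    { destruct (proj1 Hs) as [|<-]; [assumption|]. rewrite kummerM_0 in Hroot. lra. }
    exists s. split; [exact Hs0|]. split; [exact Hroot|].
    intros t Ht Htroot. destruct (Rtotal_order t s) as [Hlt|[Heq|Hgt]]; [|exact Heq|].
    + pose proof (kummerM_decreasing t s ltac:(lra)). lra.
    + pose proof (kummerM_decreasing s t ltac:(lra)). lra.
Qed.

Lemma is_derive_kummer_profile (r : R) :
  is_derive (kummer_profile a b) r (dkummer_profile a b r).
Proof.
  unfold kummer_profile, dkummer_profile. auto_derive.
  - eexists. apply is_derive_kummerM.
  - rewrite (is_derive_unique _ _ _ (is_derive_kummerM _)).
    change (r * (r * 1) * / 4) with (r ^ 2 / 4). field.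
Qed.

Lemma is_derive_dkummer_profile (r : R) :
  is_derive (dkummer_profile a b) r (d2kummer_profile a b r).
Proof.
  unfold dkummer_profile, d2kummer_profile. auto_derive.
  - eexists. apply is_derive_dkummerM.
  - rewrite (is_derive_unique _ _ _ (is_derive_dkummerM _)).
    change (r * (r * 1) * / 4) with (r ^ 2 / 4). field.
Qed.

Lemma continuous_d2kummer_profile (r : R) : continuous (d2kummer_profile a b) r.
Proof.
  apply (ex_derive_continuous (K := R_AbsRing) (V := R_NormedModule)).
  unfold d2kummer_profile. auto_derive.
  split; [apply ex_derive_d2kummerM | split; [eexists; apply is_derive_dkummerM | exact I]].
Qed.

Lemma continuous_kummer_profile (r : R) : continuous (kummer_profile a b) r.
Proof.
  apply (ex_derive_continuous (K := R_AbsRing) (V := R_NormedModule)).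
  eexists. apply is_derive_kummer_profile.
Qed.

Lemma kummer_profile_0 : kummer_profile a b 0 = 1.
Proof. unfold kummer_profile. replace (0 ^ 2 / 4) with 0 by field. exact kummerM_0. Qed.

Lemma dkummer_profile_0 : dkummer_profile a b 0 = 0.
Proof. unfold dkummer_profile, Rdiv. ring. Qed.

Lemma kummer_profile_ode (r : R) : r <> 0 ->
  d2kummer_profile a b r + ((2 * b - 1) / r - r / 2) * dkummer_profile a b r
    - a * kummer_profile a b r = 0.
Proof.
  intros Hr. rewrite <- (kummer_ode (r ^ 2 / 4)).
  unfold d2kummer_profile, dkummer_profile, kummer_profile. field. exact Hr.
Qed.

End KummerNegativeParameter.

Lemma two_sqrt_quarter_square s : 0 <= s -> (2 * sqrt s) ^ 2 / 4 = s.
Proof.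
  intros Hs. replace ((2 * sqrt s) ^ 2 / 4) with (sqrt s * sqrt s) by (simpl; field).
  exact (sqrt_sqrt s Hs).
Qed.

Section ProfileProblem.
Variable n : nat.
Hypothesis hn : (1 <= n)%nat.

Local Notation M := (kummerM (-1/2) (INR n / 2)).
Local Notation dM := (dkummerM (-1/2) (INR n / 2)).
Local Notation V := (kummer_profile (-1/2) (INR n / 2)).
Local Notation V1 := (dkummer_profile (-1/2) (INR n / 2)).
Local Notation V2 := (d2kummer_profile (-1/2) (INR n / 2)).

Let Ha : -1 < -1/2 < 0.
Proof. lra. Qed.

Let Hn : 1 <= INR n.
Proof. apply (le_INR 1). exact hn. Qed.

Let Hb : 0 < INR n / 2.
Proof. lra. Qed.

Lemma profile_ode (r : R) : r <> 0 ->
  V2 r + ((INR n - 1) / r - r / 2) * V1 r + V r / 2 = 0.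
Proof.
  intros Hr. rewrite <- (kummer_profile_ode _ _ Ha Hb r Hr).
  replace (2 * (INR n / 2) - 1) with (INR n - 1) by field. field. exact Hr.
Qed.

Lemma profile_solution_of_root (s : R) : 0 < s -> M s = 0 ->
  let ell := / (- sqrt (s / 2) * dM s) in
  profile_solution n ell (2 * sqrt s) (fun r => ell * V r).
Proof.
  intros Hs Hroot ell.
  assert (HdM : dM s < 0).
  { pose proof (dkummerM_le _ _ Ha Hb s (Rlt_le _ _ Hs)). assert (-1/2 / (INR n / 2) < 0).
    { apply Rdiv_neg_pos; lra. } lra. }
  assert (Hsqrt : 0 < sqrt s) by (apply sqrt_lt_R0; exact Hs).
  assert (Hsqrt2 : 0 < sqrt 2) by (apply sqrt_lt_R0; lra).
  assert (Hsqrt_div : sqrt (s / 2) = sqrt s / sqrt 2) by (apply sqrt_div_alt; lra).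
  assert (Hell : 0 < ell).
  { unfold ell. rewrite Hsqrt_div. apply Rinv_0_lt_compat.
    assert (0 < sqrt s / sqrt 2) by (apply Rdiv_lt_0_compat; lra). nra. }
  assert (HRs := two_sqrt_quarter_square s (Rlt_le _ _ Hs)).
  assert (HU : forall r, is_derive (fun r => ell * V r) r (ell * V1 r))
    by (intros r; apply is_derive_scal, is_derive_kummer_profile; assumption).
  assert (HU1 : forall r, is_derive (fun r => ell * V1 r) r (ell * V2 r))
    by (intros r; apply is_derive_scal, is_derive_dkummer_profile; assumption).
  repeat split.
  - exact Hell.
  - lra.
  - intros r Hr. apply Rmult_le_pos; [lra|]. unfold kummer_profile. rewrite <- Hroot.
    assert (Hr2 : r ^ 2 / 4 <= s).
    { rewrite <- HRs. apply Rmult_le_compat_r; [lra|]. apply pow_incr. lra. }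
    destruct (Req_dec (r ^ 2 / 4) s) as [->|Hne]; [lra|].
    apply Rlt_le, kummerM_decreasing; try assumption. split; [|lra].
    apply Rmult_le_pos; [apply pow_le|]; lra.
  - apply continuous_on_forall. intros r _.
    apply (ex_derive_continuous (K := R_AbsRing) (V := R_NormedModule)). eexists. apply HU.
  - exists (fun r => ell * V1 r), (fun r => ell * V2 r). repeat split.
    + apply derivative_on_of_is_derive. intros r _. apply HU.
    + apply derivative_on_of_is_derive. intros r _. apply HU1.
    + apply continuous_on_forall. intros r _.
      apply (filterlim_fun_mult _ _ _ _ _ (filterlim_const ell)).
      apply continuous_d2kummer_profile; assumption.
    + intros r Hr. rewrite <- (Rmult_0_r ell), <- (profile_ode r) by lra. field. lra.
    + rewrite kummer_profile_0 by assumption. ring.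
    + rewrite dkummer_profile_0. ring.
  - unfold kummer_profile. rewrite HRs, Hroot. ring.
  - replace (- sqrt 2) with (ell * V1 (2 * sqrt s)).
    + eapply filterlim_filter_le_1; [|exact (proj1 (is_derive_iff_quotient _ _ _) (HU _))].
      apply filter_le_within_subset; [apply locally_filter | intros x Hx; lra].
    + unfold ell, dkummer_profile. rewrite HRs, Hsqrt_div. field. lra.
Qed.

Lemma profile_solution_eq_kummer_open (ell Rr : R) (U : R -> R) :
  profile_solution n ell Rr U -> forall r, 0 < r < Rr -> U r = ell * V r.
Proof.
  intros [_ [HRr [_ [HUc [[U1 [U2 [HU1 [HU2 [_ [Hode [HU0 HU10]]]]]]] _]]]]].
  assert (Hright : locally 0 (fun y => y < Rr)) by exact (open_lt Rr 0 HRr).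
  assert (Hinterior : forall r, 0 < r < Rr -> locally r (fun y => 0 <= y < Rr)).
  { intros r Hr. generalize (open_and _ _ (open_gt 0) (open_lt Rr) r Hr).
    apply filter_imp. intros y Hy. lra. }
  intros r Hr. apply Rminus_diag_uniq. revert r Hr.
  apply (ode_solution_eq0_of_zero_data (fun x => (INR n - 1) / x) _
           (fun x => U1 x - ell * V1 x) (fun x => U2 x - ell * V2 x)).
  - intros x Hx. apply (is_derive_minus U (fun r => ell * V r)).
    + exact (is_derive_of_derivative_on _ _ _ x HU1 (Hinterior x Hx)).
    + apply is_derive_scal, is_derive_kummer_profile; assumption.
  - intros x Hx. apply (is_derive_minus U1 (fun r => ell * V1 r)).
    + exact (is_derive_of_derivative_on _ _ _ x HU2 (Hinterior x Hx)).
    + apply is_derive_scal, is_derive_dkummer_profile; assumption.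
  - intros x Hx. apply Rdiv_le_0_compat; lra.
  - intros x Hx. pose proof (profile_ode x ltac:(lra)) as HVode. specialize (Hode x Hx).
    transitivity ((U2 x + ((INR n - 1) / x - x / 2) * U1 x + U x / 2)
                   - ell * (V2 x + ((INR n - 1) / x - x / 2) * V1 x + V x / 2)).
    + field. lra.
    + rewrite Hode, HVode. ring.
  - replace 0 with (U 0 - ell * V 0) at 2
      by (rewrite HU0, kummer_profile_0 by assumption; ring).
    refine (filterlim_fun_minus _ _ _ _ _ _
              (filterlim_fun_mult _ _ _ _ _ (filterlim_const ell) (filterlim_filter_le_1 _
                 (filter_le_within (F := locally 0) (fun u => 0 < u))
                 (continuous_kummer_profile _ _ Ha Hb 0)))).
    refine (filterlim_filter_le_1 _ (at_right_le_within _ _ _) (HUc 0 _)); [|lra].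
    generalize Hright. apply filter_imp. intros y Hy Hy0. lra.
  - replace 0 with (U1 0 - ell * V1 0) at 2 by (rewrite HU10, dkummer_profile_0; ring).
    refine (filterlim_fun_minus _ _ _ _ _ _
              (filterlim_fun_mult _ _ _ _ _ (filterlim_const ell) (filterlim_filter_le_1 _
                 (filter_le_within (F := locally 0) (fun u => 0 < u))
                 (ex_derive_continuous (K := R_AbsRing) (V := R_NormedModule) _ _
                    (ex_intro _ _ (is_derive_dkummer_profile _ _ Ha Hb 0)))))).
    refine (filterlim_filter_le_1 _ (at_right_le_within _ _ _)
              (continuous_on_of_derivative_on _ _ _ HU2 0 _)); [|lra].
    generalize Hright. apply filter_imp. intros y Hy Hy0. lra.
Qed.

Lemma profile_solution_eq_kummer (ell Rr : R) (U : R -> R) :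
  profile_solution n ell Rr U -> forall r, 0 <= r <= Rr -> U r = ell * V r.
Proof.
  intros Hsol. pose proof (profile_solution_eq_kummer_open _ _ _ Hsol) as Hagree.
  destruct Hsol as [_ [HRr [_ [HUc [[? [? [_ [_ [_ [_ [HU0 _]]]]]]] _]]]]].
  intros r Hr.
  destruct (Req_dec r 0) as [->|Hr0]; [rewrite HU0, kummer_profile_0 by assumption; ring|].
  destruct (Req_dec r Rr) as [->|HrRr]; [|apply Hagree; lra].
  assert (Hleft : locally Rr (fun y => 0 < y)) by exact (open_gt 0 Rr HRr).
  apply (filterlim_locally_unique (F := at_left Rr) U).
  - refine (filterlim_filter_le_1 _ (at_left_le_within _ _ _) (HUc Rr _)); [|lra].
    generalize Hleft. apply filter_imp. intros y Hy Hy0. lra.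
  - apply filterlim_ext_loc with (f := fun r => ell * V r).
    + unfold at_left, within. generalize Hleft. apply filter_imp. intros y Hy Hy0.
      symmetry. apply Hagree. lra.
    + exact (filterlim_fun_mult _ _ _ _ _ (filterlim_const ell) (filterlim_filter_le_1 _
               (filter_le_within (F := locally Rr) (fun u => u < Rr))
               (continuous_kummer_profile _ _ Ha Hb Rr))).
Qed.

Lemma profile_solution_slope (ell Rr : R) (U : R -> R) :
  profile_solution n ell Rr U -> ell * V1 Rr = - sqrt 2.
Proof.
  intros Hsol. pose proof (profile_solution_eq_kummer _ _ _ Hsol) as HUV.
  destruct Hsol as [_ [HRr [_ [_ [_ [_ Hslope]]]]]].
  assert (Hleft : locally Rr (fun y => 0 < y)) by exact (open_gt 0 Rr HRr).
  apply (filterlim_locally_unique (F := at_left Rr) (fun x => (U x - U Rr) / (x - Rr))).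
  - apply filterlim_ext_loc with (f := fun x => (ell * V x - ell * V Rr) / (x - Rr)).
    + unfold at_left, within. generalize Hleft. apply filter_imp. intros y Hy Hy0.
      rewrite !HUV by lra. reflexivity.
    + refine (filterlim_filter_le_1 _ _ (proj1 (is_derive_iff_quotient _ _ _)
                (is_derive_scal _ _ ell _ (is_derive_kummer_profile _ _ Ha Hb Rr)))).
      apply filter_le_within_subset; [apply locally_filter | intros y Hy; lra].
  - refine (filterlim_filter_le_1 _ (at_left_le_within _ _ _) Hslope).
    generalize Hleft. apply filter_imp. intros y Hy Hy0. lra.
Qed.

Lemma profile_solution_radius (s ell Rr : R) (U : R -> R) :
  (forall t, 0 < t -> M t = 0 -> t = s) ->
  profile_solution n ell Rr U -> Rr = 2 * sqrt s.
Proof.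
  intros Huniq Hsol. pose proof (profile_solution_eq_kummer _ _ _ Hsol Rr) as HUV.
  destruct Hsol as [Hell [HRr [_ [_ [_ [HUR _]]]]]].
  assert (HRs : Rr ^ 2 / 4 = s).
  { apply Huniq; [pose proof (pow_lt Rr 2 HRr); lra|].
    rewrite HUR in HUV.
    destruct (Rmult_integral _ _ (eq_sym (HUV ltac:(lra)))) as [H|H]; [lra | exact H]. }
  rewrite <- HRs. replace (Rr ^ 2 / 4) with ((Rr / 2) ^ 2) by field.
  rewrite sqrt_pow2 by lra. field.
Qed.

Lemma profile_solution_height (s ell : R) (U : R -> R) :
  0 < s -> profile_solution n ell (2 * sqrt s) U -> / ell = - sqrt (s / 2) * dM s.
Proof.
  intros Hs Hsol. pose proof (profile_solution_slope _ _ _ Hsol) as Hslope.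
  destruct Hsol as [Hell _].
  unfold dkummer_profile in Hslope. rewrite two_sqrt_quarter_square in Hslope by lra.
  assert (0 < sqrt 2) by (apply sqrt_lt_R0; lra).
  rewrite sqrt_div_alt by lra. apply (Rmult_eq_reg_l ell); [|lra].
  replace (ell * (- (sqrt s / sqrt 2) * dM s))
    with (- (ell * (dM s * (2 * sqrt s / 2))) / sqrt 2) by (field; lra).
  rewrite Hslope, Rinv_r by lra. field. lra.
Qed.

End ProfileProblem.

Theorem lemma6p8 (n : nat) (hn : (1 <= n)%nat) :
  exists sstar : R,
    0 < sstar /\ kummerM (-1/2) (INR n / 2) sstar = 0 /\
    (forall s, 0 < s -> kummerM (-1/2) (INR n / 2) s = 0 -> s = sstar) /\
    (exists (ell Rr : R) (U : R -> R), profile_solution n ell Rr U) /\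
    (forall (ell Rr : R) (U : R -> R), profile_solution n ell Rr U ->
       Rr = 2 * sqrt sstar /\
       / ell = - sqrt (sstar / 2) * Derive (fun s => kummerM (-1/2) (INR n / 2) s) sstar /\
       (forall r, 0 <= r <= Rr -> U r = ell * kummerM (-1/2) (INR n / 2) (r ^ 2 / 4))).
Proof.
  assert (Ha : -1 < -1/2 < 0) by lra.
  assert (Hb : 0 < INR n / 2) by (apply (le_INR 1) in hn; simpl in hn; lra).
  destruct (kummerM_unique_positive_root _ _ Ha Hb) as [s [Hs [Hroot Huniq]]].
  exists s. split; [exact Hs|]. split; [exact Hroot|]. split; [exact Huniq|]. split.
  { eexists _, _, _. exact (profile_solution_of_root n hn s Hs Hroot). }
  intros ell Rr U Hsol.
  assert (HRr := profile_solution_radius n hn s _ _ _ Huniq Hsol).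
  split; [exact HRr|]. split; [|exact (profile_solution_eq_kummer n hn _ _ _ Hsol)].
  replace (Derive _ s) with (dkummerM (-1/2) (INR n / 2) s)
    by (symmetry; apply is_derive_unique, is_derive_kummerM; assumption).
  subst Rr. exact (profile_solution_height n hn s _ _ Hs Hsol).
Qed.
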